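(* The distribution of the rescaled magnetization under the Gibbs measure satisfies $$\mu_{N,\beta,\alpha}\Big(\sqrt{\tfrac{N}{s_N}}\,m\in\cdot\Big)\star\mathcal{N}(0,A^{-1})=z_N^{-1}\exp\Big\{-\tfrac{N}{s_N}\varphi_N\Big(\sqrt{\tfrac{s_N}{N}}\,x\Big)\Big\}\,\mathrm{d}^{s_N}x,$$ where $\star$ denotes convolution, $$\varphi_N(x)=\tfrac12x^TAx-\sum_{k=1}^{s_N}\log\cosh(x^TAe_k)=\tfrac{\beta}{2}\sum_{k}x_k^2+\tfrac{\alpha}{2}\sum_k x_k(x_{k-1}+x_{k+1})-\sum_k\log\cosh\big(\beta x_k+\alpha(x_{k-1}+x_{k+1})\big),$$ and $z_N=\int_{\mathbb{R}^{s_N}}\exp\{-\frac{N}{s_N}\varphi_N(\sqrt{s_N/N}\,x)\}\,\mathrm{d}^{s_N}x$.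
   Context: Parameters $\beta>2\alpha>0$. Let $(s_N)$ be a non-decreasing sequence of positive integers with $s_N$ dividing $N$; $\{1,\dots,N\}$ is partitioned into blocks $S_1,\dots,S_{s_N}$ of size $N/s_N$, block indices cyclic ($x_0=x_{s_N}$, $x_{s_N+1}=x_1$). For $\sigma\in\{-1,+1\}^N$, $m_k=\frac{s_N}{N}\sum_{i\in S_k}\sigma_i$, $m=(m_1,\dots,m_{s_N})$. $A=\beta I+\alpha(P+P^T)$ with $P$ the $s_N\times s_N$ cyclic shift matrix (positive definite since $\beta>2\alpha$), and $e_k$ the standard basis vectors of $\mathbb{R}^{s_N}$. The Gibbs measure is $\mu_{N,\beta,\alpha}(\sigma)=Z_{N,\beta,\alpha}^{-1}\exp\{\frac{N}{2s_N}m^TAm\}2^{-N}$ on $\{-1,+1\}^N$. *)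

From HB Require Import structures.
From mathcomp Require Import all_boot all_order all_algebra.
From mathcomp Require Import all_classical all_reals all_analysis.
Import Order.TTheory GRing.Theory Num.Theory.
Import numFieldNormedType.Exports.
Local Open Scope classical_set_scope.
Local Open Scope ring_scope.

Section Defs.
Variable R : realType.

(** Spin configurations sigma in {-1,+1}^N, encoded by booleans. *)
Definition spin (b : bool) : R := if b then 1 else -1.

Definition shiftP (s : nat) : 'M[R]_s := \matrix_(i, j) (j == ordS i)%:R.
Definition Amat (s : nat) (beta alpha : R) : 'M[R]_s :=
  beta%:M + alpha *: (shiftP s + (shiftP s)^T).

(** A point of R^s is an s-tuple (so that the product Borel sigma-algebra
    of the library is available); its row-vector view: *)
Definition vrow (s : nat) (x : s.-tuple R) : 'rV[R]_s := \row_i tnth x i.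
Definition tscale (s : nat) (c : R) (x : s.-tuple R) : s.-tuple R :=
  [tuple c * tnth x i | i < s].
Definition tadd (s : nat) (x y : s.-tuple R) : s.-tuple R :=
  [tuple tnth x i + tnth y i | i < s].

(** Block magnetization: block S_k = {i | i / (N/s) = k} (0-based). *)
Definition magn (N s : nat) (sigma : {ffun 'I_N -> bool}) : s.-tuple R :=
  [tuple (s%:R / N%:R) * \sum_(i < N | (i %/ (N %/ s))%N == k) spin (sigma i)
   | k < s].

Definition gibbs_weight (N s : nat) (beta alpha : R) (sigma : {ffun 'I_N -> bool}) : R :=
  let m := vrow s (magn N s sigma) in
  expR (N%:R / (2 * s%:R) * (m *m Amat s beta alpha *m m^T) 0 0) / 2 ^+ N.
Definition Zpart (N s : nat) (beta alpha : R) : R :=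
  \sum_(sigma : {ffun 'I_N -> bool}) gibbs_weight N s beta alpha sigma.
Definition gibbs (N s : nat) (beta alpha : R) (sigma : {ffun 'I_N -> bool}) : R :=
  gibbs_weight N s beta alpha sigma / Zpart N s beta alpha.

(** Integral over R^n of a [0,+oo]-valued function against Lebesgue measure,
    computed as an iterated integral of one-dimensional Lebesgue integrals
    (by Tonelli this is the integral against n-dimensional Lebesgue measure
    for nonnegative measurable integrands). *)
Fixpoint iint (n : nat) : (n.-tuple R -> \bar R) -> \bar R :=
  match n return (n.-tuple R -> \bar R) -> \bar R with
  | 0 => fun f => f [tuple]
  | n'.+1 => fun f =>
      (\int[@lebesgue_measure R]_t iint n' (fun x : n'.-tuple R => f (cons_tuple t x)))%E
  end.

Definition iint_on (n : nat) (B : set (n.-tuple R)) (f : n.-tuple R -> \bar R) : \bar R :=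
  iint n (fun x => if `[< B x >] then f x else 0%E).

Definition logcosh (u : R) : R := ln ((expR u + expR (- u)) / 2).

Definition phiN (s : nat) (beta alpha : R) (x : s.-tuple R) : R :=
  let v := vrow s x in let A := Amat s beta alpha in
  2^-1 * (v *m A *m v^T) 0 0 - \sum_(k < s) logcosh ((v *m A) 0 k).

Definition dens (N s : nat) (beta alpha : R) (x : s.-tuple R) : R :=
  expR (- (N%:R / s%:R) * phiN s beta alpha (tscale s (Num.sqrt (s%:R / N%:R)) x)).
Definition zN (N s : nat) (beta alpha : R) : \bar R :=
  iint s (fun x => (dens N s beta alpha x)%:E).

Definition gauss_density (s : nat) (A : 'M[R]_s) (x : s.-tuple R) : R :=
  Num.sqrt (\det A) / Num.sqrt ((2 * pi) ^+ s) *
  expR (- (2^-1 * (vrow s x *m A *m (vrow s x)^T) 0 0)).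
Definition gauss_meas (s : nat) (A : 'M[R]_s) (C : set (s.-tuple R)) : \bar R :=
  iint_on s C (fun x => (gauss_density s A x)%:E).

(** Law of sqrt(N/s) m under mu_{N,beta,alpha}, convolved with N(0,A^{-1}):
    (nu * rho)(B) = sum_sigma mu(sigma) rho(B - sqrt(N/s) m(sigma)). *)
Definition conv_law (N s : nat) (beta alpha : R) (B : set (s.-tuple R)) : \bar R :=
  (\sum_(sigma : {ffun 'I_N -> bool})
     (gibbs N s beta alpha sigma)%:E *
     gauss_meas s (Amat s beta alpha)
       [set x | B (tadd s (tscale s (Num.sqrt (N%:R / s%:R)) (magn N s sigma)) x)])%E.

End Defs.

From HB Require Import structures.
From mathcomp Require Import all_boot all_order all_algebra.
From mathcomp Require Import all_classical all_reals all_analysis.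
From mathcomp Require Import measurable_realfun ring lra.
Import Order.TTheory GRing.Theory Num.Theory.
Import numFieldNormedType.Exports.

(* Hubbard-Stratonovich transform.  Convolving the law of [y = sqrt(N/s) m] with
   N(0, A^-1) gives the density [G(x) = sum_sigma mu(sigma) g_A(x - y_sigma)], where
   [g_A(x) = K exp(-x^T A x / 2)].  Expanding [(x - y)^T A (x - y)], the term
   [y^T A y / 2] cancels the Gibbs weight, and the cross term [x^T A y] is linear in the
   spins, so the sum over sigma factorises into a product of [cosh] over the sites; all
   sites of a block give the same factor, whence
   [G(x) = (K / Z) exp(-(N/s) phi_N(sqrt(s/N) x))].  As [G] is a probability density,
   [z_N = Z / K] is finite and positive.  Positive definiteness of [A] (so [K > 0]) and
   the Gaussian integral [int exp(-x^T A x / 2) = sqrt((2 pi)^s / det A)] are proved by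
   induction on the dimension, through the Schur complement of the last coordinate. *)

Set Implicit Arguments.
Unset Strict Implicit.
Unset Printing Implicit Defensive.

Local Open Scope classical_set_scope.
Local Open Scope ring_scope.

Section iterated_integral.
Variable R : realType.
Local Notation mu := (@lebesgue_measure R).
Local Open Scope ereal_scope.

Lemma eq_iint n (f g : n.-tuple R -> \bar R) : f =1 g -> iint R n f = iint R n g.
Proof.
elim: n f g => [|n IH] f g fg /=; first exact: fg.
by apply: eq_integral => t _; apply: IH => x; exact: fg.
Qed.

Lemma iint_ge0 n (f : n.-tuple R -> \bar R) :
  (forall x, 0 <= f x) -> 0 <= iint R n f.
Proof.
elim: n f => [|n IH] f f0 /=; first exact: f0.
by apply: integral_ge0 => t _; apply: IH => x; exact: f0.
Qed.

Lemma measurable_fun_iint n : forall d (Y : measurableType d)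
    (f : Y * n.-tuple R -> \bar R),
  measurable_fun setT f -> (forall z, 0 <= f z) ->
  measurable_fun setT (fun y => iint R n (fun x => f (y, x))).
Proof.
elim: n => [|n IH] d Y f mf f0 /=.
  by apply: measurableT_comp mf _; exact: measurable_fun_pair.
pose g (p : (Y * measurableTypeR R) * n.-tuple R) := f (p.1.1, cons_tuple p.1.2 p.2).
have mg : measurable_fun setT g.
  apply: measurableT_comp mf _; apply: measurable_fun_pair => /=.
    exact: measurableT_comp.
  apply: (@measurable_cons _ _ _ _
    (fun p : (Y * measurableTypeR R) * n.-tuple R => p.1.2) n snd).
    exact: measurableT_comp.
  exact: measurable_snd.
have mG := IH _ _ g mg (fun z => f0 _).
apply: (@measurable_fun_fubini_tonelli_F _ _ _ _ R mu _ mG).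
by move=> z; apply: iint_ge0 => x; exact: f0.
Qed.

Lemma measurable_iint_cons n (F : n.+1.-tuple R -> \bar R) :
  measurable_fun setT F -> (forall x, 0 <= F x) ->
  measurable_fun (setT : set (measurableTypeR R))
    (fun t => iint R n (fun x => F (cons_tuple t x))).
Proof.
move=> mF F0; apply: (measurable_fun_iint
  (f := fun p : measurableTypeR R * n.-tuple R => F (cons_tuple p.1 p.2))) => //.
apply: measurableT_comp mF _.
apply: (@measurable_cons _ _ _ _
  (fun p : measurableTypeR R * n.-tuple R => p.1) n snd).
  exact: measurable_fst.
exact: measurable_snd.
Qed.

Lemma measurable_cons_section n (F : n.+1.-tuple R -> \bar R) (t : R) :
  measurable_fun setT F -> measurable_fun setT (fun x => F (cons_tuple t x)).
Proof.
move=> mF; apply: measurableT_comp mF _.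
exact: (@measurable_cons _ _ _ _ (fun _ : n.-tuple R => t) n id).
Qed.

Lemma ge0_iint_sum n (I : Type) (r : seq I) (f : I -> n.-tuple R -> \bar R) :
  (forall i, measurable_fun setT (f i)) -> (forall i x, 0 <= f i x) ->
  iint R n (fun x => \sum_(i <- r) f i x) = \sum_(i <- r) iint R n (f i).
Proof.
elim: n f => [|n IH] f mf f0 //=.
transitivity (\int[mu]_t \sum_(i <- r) iint R n (fun x => f i (cons_tuple t x))).
  apply: eq_integral => t _; apply: (IH (fun i x => f i (cons_tuple t x))).
    by move=> i; exact: measurable_cons_section.
  by move=> i x; exact: f0.
apply: ge0_integral_sum => // [i|i t _].
  by apply: measurable_iint_cons => //; exact: f0.
by apply: iint_ge0 => x; exact: f0.
Qed.

Lemma ge0_iintZl n (k : \bar R) (f : n.-tuple R -> \bar R) :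
  measurable_fun setT f -> (forall x, 0 <= f x) -> 0 <= k ->
  iint R n (fun x => k * f x) = k * iint R n f.
Proof.
elim: n f => [|n IH] f mf f0 k0 //=.
transitivity (\int[mu]_t (k * iint R n (fun x => f (cons_tuple t x)))).
  apply: eq_integral => t _; apply: IH => //.
  exact: measurable_cons_section.
apply: ge0_integralZl => //; first exact: measurable_iint_cons.
by move=> t _; apply: iint_ge0.
Qed.

Local Notation translate a := (fun t : measurableTypeR R => a + t : measurableTypeR R)%R.

Lemma measurable_translate (a : R) : measurable_fun setT (translate a).
Proof. exact: measurable_funD. Qed.

Lemma lebesgue_measure_translate (a : R) (A : set (measurableTypeR R)) :
  measurable A -> mu A = pushforward mu (translate a) A.
Proof.
have := measurable_translate a => mta mA.
apply: lebesgue_measure_unique => //= _ [[c e]] _ <-; rewrite /pushforward.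
have -> : translate a @^-1` `]c, e]%classic = `](c - a)%R, (e - a)%R]%classic.
  apply/seteqP; split => x /=; rewrite !in_itv /= => /andP[? ?].
    by apply/andP; split; lra.
  by apply/andP; split; lra.
rewrite !lebesgue_measure_itv /= !lte_fin ltrD2r.
by case: ifP => // _; rewrite -!EFinD; congr (_%:E); ring.
Qed.

Lemma ge0_integral_translate (a : R) (h : measurableTypeR R -> \bar R) :
  measurable_fun setT h -> (forall t, 0 <= h t) ->
  \int[mu]_t h (a + t)%R = \int[mu]_t h t.
Proof.
move=> mh h0; have mta := measurable_translate a.
rewrite [RHS](eq_measure_integral (pushforward mu (translate a))).
  by rewrite ge0_integral_pushforward // preimage_setT.
by move=> A mA _; exact: lebesgue_measure_translate.
Qed.

Lemma tadd_cons n (y0 t : R) (y x : n.-tuple R) :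
  tadd R n.+1 (cons_tuple y0 y) (cons_tuple t x) =
  cons_tuple (y0 + t)%R (tadd R n y x).
Proof.
apply: eq_from_tnth => i; rewrite /tadd tnth_mktuple.
by case: (unliftP ord0 i) => [j ->|->]; rewrite ?tnthS ?tnth_mktuple ?tnth0.
Qed.

Lemma ge0_iint_translate n (y : n.-tuple R) (f : n.-tuple R -> \bar R) :
  measurable_fun setT f -> (forall x, 0 <= f x) ->
  iint R n (fun x => f (tadd R n y x)) = iint R n f.
Proof.
elim: n y f => [|n IH] y f mf f0 /=; first by rewrite tuple0.
case/tupleP: y => y0 y.
transitivity (\int[mu]_t iint R n (fun x => f (cons_tuple (y0 + t)%R x))).
  apply: eq_integral => t _; under eq_iint do rewrite tadd_cons.
  by apply: IH => //; exact: measurable_cons_section.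
apply: (ge0_integral_translate y0 (h := fun u => iint R n (fun x => f (cons_tuple u x)))).
  exact: measurable_iint_cons.
by move=> u; apply: iint_ge0.
Qed.

Lemma iint_onE n (B : set (n.-tuple R)) (f : n.-tuple R -> \bar R) :
  iint_on R n B f = iint R n (f \_ B).
Proof. by []. Qed.

Lemma iint_on_setT n (f : n.-tuple R -> \bar R) : iint_on R n setT f = iint R n f.
Proof. by apply: eq_iint => x; rewrite asboolT. Qed.

Lemma measurable_fun_restrict n (B : set (n.-tuple R)) (f : n.-tuple R -> \bar R) :
  measurable B -> measurable_fun setT f -> measurable_fun setT (f \_ B).
Proof.
by move=> mB mf; apply/(measurable_restrictT _ mB); exact: measurable_funTS.
Qed.

Definition trcons n (x : n.-tuple R) (t : R) : n.+1.-tuple R := [tuple of rcons x t].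

Lemma tnth_trcons_widen n (x : n.-tuple R) t i :
  tnth (trcons x t) (widen_ord (leqnSn n) i) = tnth x i.
Proof. by rewrite (tnth_nth 0%R) (tnth_nth 0%R) /= nth_rcons size_tuple ltn_ord. Qed.

Lemma tnth_trcons_max n (x : n.-tuple R) t : tnth (trcons x t) ord_max = t.
Proof. by rewrite (tnth_nth 0%R) /= nth_rcons size_tuple ltnn eqxx. Qed.

Lemma iint_trcons n (f : n.+1.-tuple R -> \bar R) :
  iint R n.+1 f = iint R n (fun x => \int[mu]_t f (trcons x t)).
Proof.
elim: n f => [|n IH] f.
  by apply: eq_integral => t _; congr f; exact: val_inj.
change (\int[mu]_t1 iint R n.+1 (fun x => f (cons_tuple t1 x)) =
  \int[mu]_t1 iint R n (fun x => \int[mu]_t f (trcons (cons_tuple t1 x) t))).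
apply: eq_integral => t1 _; rewrite IH; apply: eq_iint => x.
by apply: eq_integral => t _; congr f; exact: val_inj.
Qed.

End iterated_integral.

Section quadratic_form.
Variable R : realType.
Local Notation mu := (@lebesgue_measure R).

Definition bilform n (A : 'M[R]_n) (x y : n.-tuple R) : R :=
  \sum_i \sum_j tnth x i * A i j * tnth y j.

Definition qform n (A : 'M[R]_n) (x : n.-tuple R) : R := bilform A x x.

Lemma bilform_vrow n (A : 'M[R]_n) (x y : n.-tuple R) :
  (vrow R n x *m A *m (vrow R n y)^T) 0 0 = bilform A x y.
Proof.
rewrite mxE /bilform; under eq_bigr do rewrite !mxE big_distrl /=.
rewrite exchange_big; apply: eq_bigr => i _; apply: eq_bigr => j _.
by rewrite !mxE.
Qed.

Lemma measurable_qform n (A : 'M[R]_n) : measurable_fun setT (qform A).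
Proof.
apply: measurable_sum => i; apply: measurable_sum => j.
apply: measurable_funM; last exact: measurable_tnth.
by apply: measurable_funM; [exact: measurable_tnth|exact: measurable_cst].
Qed.

Lemma measurable_gauss_kernel n (A : 'M[R]_n) :
  measurable_fun setT (fun x => (expR (- (2^-1 * qform A x)))%:E).
Proof.
apply/measurable_EFinP; do 2 apply: measurableT_comp => //.
by apply: measurable_funM => //; exact: measurable_qform.
Qed.

Definition posdef n (A : 'M[R]_n) :=
  forall x : n.-tuple R, (exists i, tnth x i != 0) -> 0 < qform A x.

Section schur_complement.
Variables (n : nat) (A : 'M[R]_n.+1).
Hypothesis symA : A^T = A.
Local Notation w := (widen_ord (leqnSn n)).

Definition corner := A ord_max ord_max.
Definition ulblock : 'M[R]_n := \matrix_(i, j) A (w i) (w j).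
Definition lastcol (i : 'I_n) := A (w i) ord_max.
Definition schur : 'M[R]_n :=
  \matrix_(i, j) (ulblock i j - lastcol i * lastcol j / corner).
Definition cross_term (x : n.-tuple R) := \sum_i lastcol i * tnth x i.

Lemma sym_entry i j : A i j = A j i.
Proof. by rewrite -[in LHS]symA mxE. Qed.

Lemma qform_trcons x t :
  qform A (trcons x t) = qform ulblock x + 2 * t * cross_term x + corner * t ^+ 2.
Proof.
rewrite /qform /bilform big_ord_recr /=.
under eq_bigr do rewrite big_ord_recr /=.
rewrite big_ord_recr /= big_split /= !tnth_trcons_max.
under eq_bigr do rewrite !tnth_trcons_widen.
under [X in _ + X + _ = _]eq_bigr do rewrite !tnth_trcons_widen.
under [X in _ + _ + (X + _) = _]eq_bigr do rewrite !tnth_trcons_widen.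
have -> : \sum_(i < n) \sum_(j < n) tnth x i * A (w i) (w j) * tnth (trcons x t) (w j)
    = \sum_(i < n) \sum_(j < n) tnth x i * ulblock i j * tnth x j.
  by apply: eq_bigr => i _; apply: eq_bigr => j _; rewrite mxE tnth_trcons_widen.
have -> : \sum_(i < n) tnth x i * A (w i) ord_max * t = t * cross_term x.
  by rewrite mulr_sumr; apply: eq_bigr => i _; rewrite /lastcol; ring.
have -> : \sum_(i < n) t * A ord_max (w i) * tnth x i = t * cross_term x.
  by rewrite mulr_sumr; apply: eq_bigr => i _; rewrite /lastcol sym_entry; ring.
rewrite /corner; ring.
Qed.

Lemma qform_schur x : qform schur x = qform ulblock x - cross_term x ^+ 2 / corner.
Proof.
rewrite /qform /bilform.
transitivity (\sum_i \sum_j (tnth x i * ulblock i j * tnth x j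
    - (lastcol i * tnth x i) * (lastcol j * tnth x j) / corner)).
  by apply: eq_bigr => i _; apply: eq_bigr => j _; rewrite !mxE; ring.
under eq_bigr do rewrite sumrB.
rewrite sumrB; congr (_ - _).
rewrite /cross_term expr2 !big_distrl /=; apply: eq_bigr => i _.
rewrite big_distrr /= big_distrl /=; apply: eq_bigr => j _; ring.
Qed.

Lemma qform_trcons_schur x t : corner != 0 ->
  qform A (trcons x t) =
  corner * (t - (- cross_term x / corner)) ^+ 2 + qform schur x.
Proof. by move=> c0; rewrite qform_trcons qform_schur; field. Qed.

Lemma schur_sym : schur^T = schur.
Proof. by apply/matrixP => i j; rewrite !mxE (sym_entry (w i)); ring. Qed.

Lemma det_schur : corner != 0 -> \det A = corner * \det schur.
Proof.
(* Subtracting multiples of the last row clears the last column above the corner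
   without changing the determinant; expanding along that column leaves the corner
   times the determinant of the Schur complement. *)
move=> c0.
pose c (i : 'I_n.+1) := if i == ord_max then 0 else A i ord_max / corner.
pose L : 'M[R]_n.+1 := 1%:M - \matrix_(i, j) ((j == ord_max)%:R * c i).
have LA_max i : i != ord_max -> (L *m A) i ord_max = 0.
  move=> ni; rewrite mulmxBl mul1mx !mxE (bigD1 ord_max) //= big1 ?addr0.
    by rewrite !mxE eqxx mul1r /c (negbTE ni) divfK // subrr.
  by move=> k nk; rewrite !mxE (negbTE nk) !mul0r.
have LA_lift i j : (L *m A) (lift ord_max i) (lift ord_max j) = schur i j.
  rewrite mulmxBl mul1mx !mxE (bigD1 ord_max) //= big1 ?addr0; last first.
    by move=> k nk; rewrite !mxE (negbTE nk) !mul0r.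
  have Li : lift ord_max i = w i by apply: val_inj; exact: lift_max.
  have Lj : lift ord_max j = w j by apply: val_inj; exact: lift_max.
  rewrite !mxE eqxx mul1r /c Li Lj.
  have -> : (w i == ord_max) = false.
    by rewrite -Li; apply/negbTE; rewrite eq_sym neq_lift.
  by rewrite /lastcol (sym_entry ord_max); ring.
have detL : \det L = 1.
  rewrite -det_tr det_trig.
    apply: big1 => i _; rewrite !mxE eqxx /c.
    by case: (i == ord_max); rewrite ?mulr0 ?mul0r subr0.
  apply/is_trig_mxP => i j lt_ij; rewrite !mxE.
  have -> : (j == i) = false by apply/negbTE; rewrite neq_ltn lt_ij orbT.
  have -> : (i == ord_max) = false.
    by apply/negbTE; rewrite neq_ltn (leq_trans lt_ij) // -ltnS.
  by rewrite mul0r subr0.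
have -> : \det A = \det (L *m A) by rewrite det_mulmx detL mul1r.
rewrite (expand_det_col _ ord_max) (bigD1 ord_max) //= big1 ?addr0; last first.
  by move=> i ni; rewrite LA_max ?mul0r.
have -> : (L *m A) ord_max ord_max = corner.
  rewrite mulmxBl mul1mx !mxE (bigD1 ord_max) //= big1 ?addr0.
    by rewrite !mxE eqxx mul1r /c eqxx mul0r subr0.
  by move=> k nk; rewrite !mxE (negbTE nk) !mul0r.
rewrite /cofactor.
have -> : (-1) ^+ (@ord_max n + @ord_max n)%N = 1 :> R.
  by rewrite -signr_odd addnn odd_double.
rewrite mul1r; congr (_ * \det _).
by apply/matrixP => i j; rewrite -LA_lift [LHS]mxE [LHS]mxE.
Qed.

Lemma posdef_corner_gt0 : posdef A -> 0 < corner.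
Proof.
move=> pA; set o := [tuple (0 : R) | _ < n].
have o0 i : tnth o i = 0 by rewrite tnth_mktuple.
have qo : qform ulblock o = 0.
  by rewrite /qform /bilform big1 // => i _; rewrite big1 // => j _; rewrite o0 !mul0r.
have co : cross_term o = 0 by rewrite /cross_term big1 // => i _; rewrite o0 mulr0.
have := pA (trcons o 1); rewrite qform_trcons qo co mulr0 !add0r expr1n mulr1; apply.
by exists ord_max; rewrite tnth_trcons_max oner_eq0.
Qed.

Lemma posdef_schur : posdef A -> posdef schur.
Proof.
move=> pA x [i xi]; have c0 := posdef_corner_gt0 pA.
have := pA (trcons x (- cross_term x / corner)).
rewrite qform_trcons_schur ?gt_eqF // subrr expr0n mulr0 add0r; apply.
by exists (w i); rewrite tnth_trcons_widen.
Qed.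

End schur_complement.

Lemma integral_gauss_kernel (a q m : R) : 0 < a ->
  (\int[mu]_t (expR (- (2^-1 * (a * (t - m) ^+ 2 + q))))%:E =
   (expR (- (2^-1 * q)) * Num.sqrt (2 * pi / a))%:E)%E.
Proof.
move=> a0; set s := (Num.sqrt a)^-1.
have s0 : s != 0 by rewrite invr_eq0 gt_eqF // sqrtr_gt0.
have s2 : s ^+ 2 = a^-1 by rewrite exprVn sqr_sqrtr // ltW.
set K := expR (- (2^-1 * q)) * Num.sqrt (2 * pi / a).
have K0 : 0 <= K by rewrite mulr_ge0 ?expR_ge0 ?sqrtr_ge0.
have E t : expR (- (2^-1 * (a * (t - m) ^+ 2 + q))) = K * normal_pdf m s t.
  rewrite /normal_pdf (negbTE s0) /normal_peak /normal_fun s2 /K.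
  have -> : a^-1 * pi *+ 2 = 2 * pi / a by rewrite -mulr_natr; field; rewrite gt_eqF.
  have sp : Num.sqrt (2 * pi / a) != 0.
    by rewrite gt_eqF // sqrtr_gt0 divr_gt0 // mulr_gt0 // pi_gt0.
  rewrite -mulrA (mulrA (Num.sqrt _)) mulfV // mul1r -expRD; congr expR.
  by field; rewrite gt_eqF.
under eq_integral do rewrite E EFinM.
rewrite ge0_integralZl ?lee_fin // ?integral_normal_pdf ?mule1 //.
  by apply/measurable_EFinP; exact: measurable_normal_pdf.
by move=> t _; rewrite lee_fin normal_pdf_ge0.
Qed.

Lemma posdef_det_gt0 n (A : 'M[R]_n) : A^T = A -> posdef A -> 0 < \det A.
Proof.
elim: n A => [|n IH] A sA pA; first by rewrite det_mx00.
have c0 := posdef_corner_gt0 sA pA.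
rewrite det_schur ?gt_eqF // mulr_gt0 //.
exact: IH (schur_sym sA) (posdef_schur sA pA).
Qed.

Theorem iint_gauss_kernel n (A : 'M[R]_n) : A^T = A -> posdef A ->
  iint R n (fun x => (expR (- (2^-1 * qform A x)))%:E) =
  (Num.sqrt ((2 * pi) ^+ n) / Num.sqrt (\det A))%:E.
Proof.
elim: n A => [|n IH] A sA pA.
  by rewrite /= /qform /bilform big_ord0 det_mx00 mulr0 oppr0 expR0 sqrtr1 divr1.
have c0 := posdef_corner_gt0 sA pA.
have dS := posdef_det_gt0 (schur_sym sA) (posdef_schur sA pA).
rewrite iint_trcons.
transitivity (iint R n (fun x => (Num.sqrt (2 * pi / corner A))%:E *
                                 (expR (- (2^-1 * qform (schur A) x)))%:E))%E.
  apply: eq_iint => x; under eq_integral do rewrite qform_trcons_schur ?gt_eqF //.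
  by rewrite integral_gauss_kernel // EFinM muleC.
rewrite ge0_iintZl ?lee_fin ?sqrtr_ge0 //; last exact: measurable_gauss_kernel.
rewrite IH; [|exact: schur_sym|exact: posdef_schur].
rewrite -EFinM (det_schur sA) ?gt_eqF //; congr (_%:E).
have p0 : 0 < 2 * pi :> R by rewrite mulr_gt0 // pi_gt0.
rewrite exprSr !sqrtrM ?exprn_ge0 ?ltW // sqrtrV ?ltW //.
have : 0 < Num.sqrt (corner A) by rewrite sqrtr_gt0.
have : 0 < Num.sqrt (\det (schur A)) by rewrite sqrtr_gt0.
by move=> h1 h2; field; rewrite !gt_eqF.
Qed.

End quadratic_form.

Section interaction_matrix.
Variables (R : realType) (beta alpha : R).
Local Notation A s := (Amat R s beta alpha).

Lemma AmatE s (i j : 'I_s) :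
  A s i j = beta * (j == i)%:R + alpha * ((j == ordS i)%:R + (i == ordS j)%:R).
Proof. by rewrite /Amat /shiftP !mxE mulr_natr eq_sym. Qed.

Lemma Amat_sym s : (A s)^T = A s.
Proof. by apply/matrixP => i j; rewrite mxE !AmatE eq_sym [_ + (i == _)%:R]addrC. Qed.

Lemma sum_mul_delta n (f : 'I_n -> R) k : \sum_j f j * (j == k)%:R = f k.
Proof.
rewrite (bigD1 k) //= eqxx mulr1 big1 ?addr0 // => j /negbTE ->.
by rewrite mulr0.
Qed.

Lemma qform_Amat s (x : s.-tuple R) :
  qform (A s) x =
  beta * \sum_i tnth x i ^+ 2 + 2 * alpha * \sum_i tnth x i * tnth x (ordS i).
Proof.
transitivity (\sum_i \sum_j (beta * (tnth x i * tnth x j) * (j == i)%:R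
   + alpha * (tnth x i * tnth x j) * (j == ordS i)%:R
   + alpha * (tnth x i * tnth x j) * (i == ordS j)%:R)).
  by apply: eq_bigr => i _; apply: eq_bigr => j _; rewrite AmatE; ring.
under eq_bigr do rewrite !big_split /= !sum_mul_delta.
rewrite !big_split /= [X in _ + _ + X = _]exchange_big /=.
under [X in _ + _ + X = _]eq_bigr do rewrite sum_mul_delta.
by rewrite !mulr_sumr -!big_split /=; apply: eq_bigr => i _; ring.
Qed.

(* [x^T A x >= (beta - 2 alpha) |x|^2], since [2 x_i x_(i+1) >= - x_i^2 - x_(i+1)^2]
   and the cyclic shift permutes the indices. *)
Lemma Amat_posdef s : 0 < alpha -> 2 * alpha < beta -> posdef (A s).
Proof.
move=> a0 ab x [i xi]; rewrite qform_Amat.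
set S2 := \sum_i tnth x i ^+ 2.
have S2_gt0 : 0 < S2.
  rewrite /S2 (bigD1 i) //= ltr_pwDl ?exprn_even_gt0 //.
  by apply: sumr_ge0 => j _; exact: sqr_ge0.
suff : - S2 <= \sum_i tnth x i * tnth x (ordS i) by nra.
have <- : \sum_i (- (tnth x i ^+ 2 + tnth x (ordS i) ^+ 2) / 2) = - S2.
  rewrite -sumrN.
  transitivity (\sum_i ((- tnth x i ^+ 2) / 2 + (- tnth x (ordS i) ^+ 2) / 2)).
    by apply: eq_bigr => j _; ring.
  rewrite big_split /=.
  have -> : \sum_j (- tnth x (ordS j) ^+ 2 / 2) = \sum_j (- tnth x j ^+ 2 / 2).
    by rewrite [RHS](reindex_inj (@ordS_inj s)).
  by rewrite -big_split /=; apply: eq_bigr => j _; field.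
apply: ler_sum => j _; have := sqr_ge0 (tnth x j + tnth x (ordS j)); lra.
Qed.

End interaction_matrix.

Section tuple_algebra.
Variable R : realType.

Definition tsub n (x y : n.-tuple R) : n.-tuple R := [tuple tnth x i - tnth y i | i < n].

Lemma tsub_tadd n (x y : n.-tuple R) : tsub (tadd R n y x) y = x.
Proof. by apply: eq_from_tnth => i; rewrite !tnth_mktuple addrAC subrr add0r. Qed.

Lemma measurable_tsub n (y : n.-tuple R) : measurable_fun setT (fun z => tsub z y).
Proof.
apply/measurable_fun_tnthP => i.
rewrite (_ : _ \o _ = fun z => tnth z i - tnth y i); last first.
  by apply/funext => z /=; rewrite tnth_mktuple.
by apply: measurable_funB; [exact: measurable_tnth|exact: measurable_cst].
Qed.

Lemma vrow_tscale n c (x : n.-tuple R) : vrow R n (tscale R n c x) = c *: vrow R n x.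
Proof. by apply/rowP => i; rewrite !mxE tnth_mktuple. Qed.

Lemma bilformE n (A : 'M[R]_n) x y :
  bilform A x y = \sum_k (vrow R n x *m A) 0 k * tnth y k.
Proof. by rewrite -bilform_vrow mxE; apply: eq_bigr => k _; rewrite !mxE. Qed.

Lemma qform_tscale n (A : 'M[R]_n) c x : qform A (tscale R n c x) = c ^+ 2 * qform A x.
Proof.
rewrite /qform /bilform mulr_sumr; apply: eq_bigr => i _.
by rewrite mulr_sumr; apply: eq_bigr => j _; rewrite !tnth_mktuple; ring.
Qed.

Lemma qform_tsub n (A : 'M[R]_n) x y : A^T = A ->
  qform A (tsub x y) = qform A x - 2 * bilform A x y + qform A y.
Proof.
move=> sA.
have bilC : bilform A y x = bilform A x y.
  rewrite /bilform exchange_big; apply: eq_bigr => i _; apply: eq_bigr => j _.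
  by rewrite -[in LHS]sA mxE; ring.
transitivity (\sum_i \sum_j (tnth x i * A i j * tnth x j - tnth x i * A i j * tnth y j
   - tnth y i * A i j * tnth x j + tnth y i * A i j * tnth y j)).
  by apply: eq_bigr => i _; apply: eq_bigr => j _; rewrite !tnth_mktuple; ring.
under eq_bigr do rewrite !(big_split, sumrN) /=.
by rewrite !(big_split, sumrN) /= -/(bilform A y x) bilC /qform /bilform; ring.
Qed.

End tuple_algebra.

Section spin_sums.
Variable R : realType.

Definition coshR (u : R) : R := (expR u + expR (- u)) / 2.

Lemma coshR_gt0 u : 0 < coshR u.
Proof. by rewrite divr_gt0 // addr_gt0 // expR_gt0. Qed.

Lemma expR_logcosh u : expR (logcosh R u) = coshR u.
Proof. by rewrite /logcosh lnK // posrE coshR_gt0. Qed.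

Lemma sum_expR_spin N (a : 'I_N -> R) :
  \sum_(sg : {ffun 'I_N -> bool}) expR (\sum_i a i * spin R (sg i)) =
  \prod_i (2 * coshR (a i)).
Proof.
rewrite (eq_bigr (fun sg : {ffun 'I_N -> bool} => \prod_i expR (a i * spin R (sg i))));
  last by move=> sg _; exact: expR_sum.
rewrite -(bigA_distr_bigA (fun i b => expR (a i * spin R b))).
by apply: eq_bigr => i _; rewrite big_bool /= /spin mulr1 mulrN1 /coshR mulrC divfK.
Qed.

End spin_sums.

Section blocks.
Variable R : realType.

Lemma prod_div_blocks (m d : nat) (F : nat -> R) : (0 < d)%N ->
  \prod_(i < m * d) F (i %/ d)%N = \prod_(k < m) F k ^+ d.
Proof.
move=> d0; rewrite -(big_mkord xpredT (fun i => F (i %/ d)%N)).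
rewrite -(big_mkord xpredT (fun k => F k ^+ d)).
elim: m => [|m IH]; first by rewrite mul0n !big_geq.
rewrite mulSn addnC (big_cat_nat _ (leq_addr _ _)) //= IH big_nat_recr //=.
congr (_ * _); rewrite -[in RHS](addKn (m * d) d) -prodr_const_nat.
apply: eq_big_nat => i /andP[h1 h2]; congr F.
by rewrite -(subnK h1) addnC divnMDl // divn_small ?addn0 // ltn_subLR.
Qed.

Variables (N s : nat).
Hypotheses (N_gt0 : (0 < N)%N) (s_gt0 : (0 < s)%N) (s_dvd : (s %| N)%N).
Local Notation d := (N %/ s)%N.

Lemma blocksize_gt0 : (0 < d)%N.
Proof. by rewrite divn_gt0 // dvdn_leq. Qed.

Lemma block_lt (i : 'I_N) : (i %/ d < s)%N.
Proof. by rewrite ltn_divLR ?blocksize_gt0 // mulnC divnK. Qed.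

Definition block (i : 'I_N) : 'I_s := Ordinal (block_lt i).

Lemma sum_blocks (u : 'I_s -> R) (a : 'I_N -> R) :
  \sum_k u k * \sum_(i < N | (i %/ d)%N == k) a i = \sum_i u (block i) * a i.
Proof.
under eq_bigr do rewrite big_distrr /= big_mkcond /=.
rewrite exchange_big; apply: eq_bigr => i _.
rewrite (bigD1 (block i)) //= eqxx big1 ?addr0 // => k nk.
by case: eqP => // E; case/negP: nk; apply/eqP/val_inj.
Qed.

Lemma prod_blocks (F : 'I_s -> R) : \prod_i F (block i) = \prod_k F k ^+ d.
Proof.
pose G (k : nat) := F (insubd (Ordinal s_gt0) k).
transitivity (\prod_(i < N) G (i %/ d)%N).
  by apply: eq_bigr => i _; congr F; apply: val_inj; rewrite val_insubd /= block_lt.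
have := prod_div_blocks s G blocksize_gt0; rewrite mulnC divnK // => ->.
by apply: eq_bigr => k _; rewrite /G valKd.
Qed.

End blocks.

Section discrete_convolution.
Variables (R : realType) (n : nat) (I : finType).
Variables (w : I -> R) (y : I -> n.-tuple R) (g : n.-tuple R -> R).
Hypotheses (w_ge0 : forall i, 0 <= w i) (g_ge0 : forall x, 0 <= g x).
Hypothesis mg : measurable_fun setT g.
Local Open Scope ereal_scope.

Lemma iint_on_discrete_conv (B : set (n.-tuple R)) : measurable B ->
  \sum_i (w i)%:E * iint_on R n [set x | B (tadd R n (y i) x)] (fun x => (g x)%:E) =
  iint_on R n B (fun z => (\sum_i w i * g (tsub z (y i)))%:E).
Proof.
move=> mB; pose h i z := if `[< B z >] then (g (tsub z (y i)))%:E else 0.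
have mh i : measurable_fun setT (h i).
  apply: measurable_fun_restrict => //; apply/measurable_EFinP.
  exact: measurableT_comp mg (measurable_tsub _).
have h_ge0 i z : 0 <= h i z by rewrite /h; case: ifP; rewrite ?lee_fin.
transitivity (\sum_i iint R n (fun z => (w i)%:E * h i z)).
  apply: eq_bigr => i _; rewrite ge0_iintZl ?lee_fin //; congr (_ * _).
  rewrite -(ge0_iint_translate (y i) (mh i) (h_ge0 i)).
  by apply: eq_iint => x; rewrite /h tsub_tadd.
rewrite -ge0_iint_sum => [|i|i z].
- apply: eq_iint => z; rewrite /h; case: ifP => _.
    by rewrite -sumEFin; apply: eq_bigr => i _; rewrite EFinM.
  by rewrite big1 // => i _; rewrite mule0.
- by apply: emeasurable_funM => //; exact: measurable_cst.
- by rewrite mule_ge0 ?lee_fin.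
Qed.

Lemma iint_discrete_conv :
  iint R n (fun z => (\sum_i w i * g (tsub z (y i)))%:E) =
  \sum_i (w i)%:E * iint R n (fun x => (g x)%:E).
Proof.
rewrite -iint_on_setT -iint_on_discrete_conv //; apply: eq_bigr => i _.
by rewrite -iint_on_setT.
Qed.

End discrete_convolution.

Section hubbard_stratonovich.
Variables (R : realType) (beta alpha : R) (N s : nat).
Hypotheses (N_gt0 : (0 < N)%N) (s_gt0 : (0 < s)%N) (s_dvd : (s %| N)%N).
Local Notation A := (Amat R s beta alpha).
Local Notation d := (N %/ s)%N.
Local Notation blk := (block N_gt0 s_gt0 s_dvd).
Local Notation c := (Num.sqrt (N%:R / s%:R) : R).

Definition smagn (sg : {ffun 'I_N -> bool}) := tscale R s c (magn R N s sg).

Lemma N_over_s_gt0 : 0 < N%:R / s%:R :> R.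
Proof. by rewrite divr_gt0 ?ltr0n. Qed.

Lemma sqr_sqrt_N_over_s : c ^+ 2 = N%:R / s%:R.
Proof. by rewrite sqr_sqrtr // ltW // N_over_s_gt0. Qed.

Lemma sqrt_s_over_N : Num.sqrt (s%:R / N%:R) = c^-1.
Proof. by rewrite -invf_div sqrtrV // ltW // N_over_s_gt0. Qed.

Lemma N_over_s : N%:R / s%:R = d%:R :> R.
Proof. by rewrite -{1}(divnK s_dvd) natrM mulfK // pnatr_eq0 -lt0n. Qed.

Lemma gibbs_weightE sg :
  gibbs_weight R N s beta alpha sg = expR (2^-1 * qform A (smagn sg)) / 2 ^+ N.
Proof.
rewrite /gibbs_weight bilform_vrow -/(qform _ _) /smagn qform_tscale sqr_sqrt_N_over_s.
by congr (expR _ / _); field; rewrite pnatr_eq0 -lt0n.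
Qed.

Lemma bilform_smagn x sg : bilform A x (smagn sg) =
  \sum_i c^-1 * (vrow R s x *m A) 0 (blk i) * spin R (sg i).
Proof.
rewrite bilformE -(sum_blocks N_gt0 s_gt0 s_dvd
  (fun k => c^-1 * (vrow R s x *m A) 0 k) (fun i => spin R (sg i))).
apply: eq_bigr => k _; rewrite !tnth_mktuple.
have c_gt0 : 0 < c by rewrite sqrtr_gt0 N_over_s_gt0.
have -> : s%:R / N%:R = (c ^+ 2)^-1 :> R by rewrite sqr_sqrt_N_over_s invf_div.
by field; rewrite gt_eqF.
Qed.

Lemma gibbs_weight_gauss x sg :
  gibbs_weight R N s beta alpha sg * expR (- (2^-1 * qform A (tsub x (smagn sg)))) =
  expR (- (2^-1 * qform A x)) * expR (bilform A x (smagn sg)) / 2 ^+ N.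
Proof.
rewrite gibbs_weightE qform_tsub ?Amat_sym // mulrAC -!expRD.
by congr (expR _ / _); field.
Qed.

Lemma sum_gibbs_weight_gauss x :
  \sum_sg gibbs_weight R N s beta alpha sg *
          expR (- (2^-1 * qform A (tsub x (smagn sg)))) =
  expR (- (2^-1 * qform A x)) * \prod_k coshR (c^-1 * (vrow R s x *m A) 0 k) ^+ d.
Proof.
rewrite (eq_bigr _ (fun sg _ => gibbs_weight_gauss x sg)).
under eq_bigr do rewrite bilform_smagn.
rewrite -mulr_suml -mulr_sumr sum_expR_spin big_split /= prodr_const card_ord.
rewrite (prod_blocks N_gt0 s_gt0 s_dvd (fun k => coshR (c^-1 * (vrow R s x *m A) 0 k))).
by rewrite [2 ^+ N * _]mulrC mulrA mulfK // expf_neq0 // pnatr_eq0.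
Qed.

Lemma densE x : dens R N s beta alpha x =
  expR (- (2^-1 * qform A x)) * \prod_k coshR (c^-1 * (vrow R s x *m A) 0 k) ^+ d.
Proof.
rewrite /dens /phiN /= bilform_vrow -/(qform _ _) sqrt_s_over_N qform_tscale.
under eq_bigr do rewrite vrow_tscale -scalemxAl mxE.
rewrite mulrBr expRD; congr (_ * _).
  by congr expR; rewrite exprVn sqr_sqrt_N_over_s; field; rewrite !pnatr_eq0 -!lt0n s_gt0.
rewrite mulNr opprK N_over_s expRM_natl expR_sum prodrXl.
by under eq_bigr do rewrite expR_logcosh.
Qed.

Definition gauss_const : R := Num.sqrt (\det A) / Num.sqrt ((2 * pi) ^+ s).

Definition conv_density x : R :=
  \sum_sg gibbs R N s beta alpha sg * gauss_density R s A (tsub x (smagn sg)).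

Theorem conv_densityE x :
  conv_density x = gauss_const / Zpart R N s beta alpha * dens R N s beta alpha x.
Proof.
rewrite densE -sum_gibbs_weight_gauss mulr_sumr; apply: eq_bigr => sg _.
by rewrite /gibbs /gauss_density bilform_vrow -/(qform _ _) /gauss_const; ring.
Qed.

End hubbard_stratonovich.

Section gibbs_measure.
Variables (R : realType) (beta alpha : R) (N s : nat).

Lemma gibbs_weight_gt0 sg : 0 < gibbs_weight R N s beta alpha sg.
Proof. by rewrite divr_gt0 ?expR_gt0 // exprn_gt0. Qed.

Lemma Zpart_gt0 : 0 < Zpart R N s beta alpha.
Proof.
rewrite /Zpart (bigD1 [ffun => true]) //= ltr_wpDr ?gibbs_weight_gt0 //.
by apply: sumr_ge0 => sg _; exact/ltW/gibbs_weight_gt0.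
Qed.

Lemma gibbs_ge0 sg : 0 <= gibbs R N s beta alpha sg.
Proof. by rewrite divr_ge0 ?ltW ?gibbs_weight_gt0 ?Zpart_gt0. Qed.

Lemma sum_gibbs : \sum_sg gibbs R N s beta alpha sg = 1.
Proof. by rewrite -mulr_suml divff // gt_eqF // Zpart_gt0. Qed.

End gibbs_measure.

Section gibbs_convolution.
Variables (R : realType) (beta alpha : R) (N s : nat).
Hypotheses (N_gt0 : (0 < N)%N) (s_gt0 : (0 < s)%N) (s_dvd : (s %| N)%N).
Hypotheses (alpha_gt0 : 0 < alpha) (beta_gt : 2 * alpha < beta).
Local Notation A := (Amat R s beta alpha).
Local Notation K := (gauss_const beta alpha s).
Local Notation Z := (Zpart R N s beta alpha).
Local Notation cdens := (@conv_density R beta alpha N s).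
Local Open Scope ereal_scope.

Lemma det_Amat_gt0 : (0 < \det A)%R.
Proof. by apply: posdef_det_gt0; [exact: Amat_sym|exact: Amat_posdef]. Qed.

Lemma gauss_densityE x : gauss_density R s A x = (K * expR (- (2^-1 * qform A x)))%R.
Proof. by rewrite /gauss_density bilform_vrow. Qed.

Lemma gauss_const_gt0 : (0 < K)%R.
Proof.
by rewrite divr_gt0 ?sqrtr_gt0 ?det_Amat_gt0 ?exprn_gt0 ?mulr_gt0 ?pi_gt0.
Qed.

Lemma gauss_density_ge0 x : (0 <= gauss_density R s A x)%R.
Proof. by rewrite gauss_densityE mulr_ge0 ?expR_ge0 ?ltW ?gauss_const_gt0. Qed.

Lemma measurable_gauss_density : measurable_fun setT (gauss_density R s A).
Proof.
rewrite (_ : gauss_density R s A = fun x => K * expR (- (2^-1 * qform A x)))%R.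
  apply: measurable_funM => //.
  by apply/measurable_EFinP; exact: measurable_gauss_kernel.
by apply/funext => x; rewrite gauss_densityE.
Qed.

Lemma iint_gauss_density : iint R s (fun x => (gauss_density R s A x)%:E) = 1.
Proof.
under eq_iint do rewrite gauss_densityE EFinM.
rewrite ge0_iintZl ?lee_fin ?expR_ge0 ?(ltW gauss_const_gt0) //; last first.
  exact: measurable_gauss_kernel.
rewrite iint_gauss_kernel; [|exact: Amat_sym|exact: Amat_posdef].
rewrite -EFinM /gauss_const mulrA divfK ?divff // gt_eqF // sqrtr_gt0.
  exact: det_Amat_gt0.
by rewrite exprn_gt0 // mulr_gt0 // pi_gt0.
Qed.

Lemma conv_density_ge0 x : (0 <= cdens x)%R.
Proof. by apply: sumr_ge0 => sg _; rewrite mulr_ge0 ?gibbs_ge0 ?gauss_density_ge0. Qed.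

Lemma measurable_conv_density : measurable_fun setT cdens.
Proof.
apply: measurable_sum => sg; apply: measurable_funM => //.
exact: measurableT_comp measurable_gauss_density (measurable_tsub _).
Qed.

Lemma conv_lawE (B : set (s.-tuple R)) : measurable B ->
  conv_law R N s beta alpha B = iint_on R s B (fun x => (cdens x)%:E).
Proof.
move=> mB; apply: iint_on_discrete_conv => //; first exact: gibbs_ge0.
  exact: gauss_density_ge0.
exact: measurable_gauss_density.
Qed.

Lemma iint_conv_density : iint R s (fun x => (cdens x)%:E) = 1.
Proof.
rewrite iint_discrete_conv; [|exact: gibbs_ge0|exact: gauss_density_ge0|].
  under eq_bigr do rewrite iint_gauss_density mule1.
  by rewrite sumEFin sum_gibbs.
exact: measurable_gauss_density.
Qed.

Lemma dens_conv_density x : dens R N s beta alpha x = (Z / K * cdens x)%R.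
Proof.
rewrite conv_densityE // mulrA -invf_div mulVf ?mul1r // gt_eqF //.
by rewrite divr_gt0 ?gauss_const_gt0 ?Zpart_gt0.
Qed.

Lemma iint_on_dens (B : set (s.-tuple R)) : measurable B ->
  iint_on R s B (fun x => (dens R N s beta alpha x)%:E) =
  (Z / K)%:E * iint_on R s B (fun x => (cdens x)%:E).
Proof.
move=> mB; rewrite !iint_onE -ge0_iintZl.
- apply: eq_iint => x; rewrite !patchE.
  by case: ifP; rewrite ?mule0 // dens_conv_density.
- apply: measurable_fun_restrict => //.
  by apply/measurable_EFinP; exact: measurable_conv_density.
- by move=> x; rewrite patchE; case: ifP; rewrite ?lee_fin ?conv_density_ge0.
- by rewrite lee_fin divr_ge0 ?ltW ?gauss_const_gt0 ?Zpart_gt0.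
Qed.

Lemma zNE : zN R N s beta alpha = (Z / K)%:E.
Proof.
rewrite /zN -iint_on_setT iint_on_dens // iint_on_setT iint_conv_density.
by rewrite mule1.
Qed.

End gibbs_convolution.

Theorem lemma4p1 (R : realType) (beta alpha : R) (sN : nat -> nat)
  (halpha : 0 < alpha) (hbeta : 2 * alpha < beta)
  (hs_pos : forall N : nat, (0 < N)%N -> (0 < sN N)%N)
  (hs_div : forall N : nat, (0 < N)%N -> (sN N %| N)%N)
  (hs_mono : forall N M : nat, (0 < N)%N -> (N <= M)%N -> (sN N <= sN M)%N)
  (N : nat) (hN : (0 < N)%N) :
  (0 < zN R N (sN N) beta alpha < +oo)%E /\
  forall B : set ((sN N).-tuple R), measurable B ->
    conv_law R N (sN N) beta alpha B =
    (iint_on R (sN N) B (fun x => (dens R N (sN N) beta alpha x)%:E)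
       * ((fine (zN R N (sN N) beta alpha))^-1)%:E)%E.
Proof.
have s_gt0 := hs_pos N hN; have s_dvd := hs_div N hN.
have ZK_gt0 : 0 < Zpart R N (sN N) beta alpha / gauss_const beta alpha (sN N).
  by rewrite divr_gt0 ?Zpart_gt0 ?gauss_const_gt0.
rewrite zNE //; split; first by rewrite lte_fin ZK_gt0 ltry.
move=> B mB; rewrite iint_on_dens // conv_lawE //= muleAC -EFinM.
by rewrite mulfV ?gt_eqF // mul1e.
Qed.
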